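(* Let $R:K\to H$ be a Yetter--Drinfeld relative Rota--Baxter operator on the Hopf algebra $(H,\cdot,1,\Delta,\epsilon,S_H)$ with respect to $(K,\rightharpoonup)$. Define $S_K:K\to K$ by $S_K(a):=R(a_1)\rightharpoonup R^{-1}\big(S_H(R(a_2))\big)$. Then $S_K(a_1)\cdot_K a_2=\epsilon(a)1_K=a_1\cdot_K S_K(a_2)$ for all $a\in K$; consequently $K$ is a Hopf monoid in ${}^H_H\mathcal{YD}$ with antipode $S_K$.
   Context: Conventions: $\Bbbk$ is a field; algebras are associative unital, coalgebras coassociative counital; Sweedler notation $\Delta(c)=c_1\otimes c_2$ (summation omitted), iterated as $c_1\otimes c_2\otimes c_3$ etc. Yetter--Drinfeld modules: for a Hopf algebra $A$ with antipode $T$, a left-left Yetter--Drinfeld module is a left $A$-module $(V,\triangleright)$ and left $A$-comodule $\rho(v)=v_{-1}\otimes v_0$ with $\rho(a\triangleright v)=a_1v_{-1}T(a_3)\otimes a_2\triangleright v_0$; these form the braided monoidal category ${}^A_A\mathcal{YD}$ with braiding $\sigma(v\otimes w)=v_{-1}\triangleright w\otimes v_0$. A bimonoid in ${}^A_A\mathcal{YD}$ is an object with algebra and coalgebra structure maps in ${}^A_A\mathcal{YD}$, $\epsilon$ multiplicative, $\epsilon(1)=1$, $\Delta(1)=1\otimes1$, and $\Delta\circ m=(m\otimes m)(\mathrm{Id}\otimes\sigma\otimes\mathrm{Id})(\Delta\otimes\Delta)$; a Hopf monoid is a bimonoid with antipode (convolution inverse of the identity). Definition (Yetter--Drinfeld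 relative (pre-)Rota--Baxter operator). Let $(H,\cdot,1,\Delta,\epsilon,S_H)$ be a Hopf algebra and $(K,\cdot_K,1_K,\Delta,\epsilon)$ a bimonoid in ${}^H_H\mathcal{YD}$ with $H$-action $\rightharpoonup$. A coalgebra morphism $R:K\to H$ is a Yetter--Drinfeld relative pre-Rota--Baxter operator if for all $a,b\in K$: (RB1) $R(a)\cdot R(b)=R\big(a_1\cdot_K(R(a_2)\rightharpoonup b)\big)$; (RB2) $S_HR(R(a_1)\rightharpoonup b_1)\cdot R(a_2)\cdot R(b_2)\otimes R(R(a_3)\rightharpoonup b_3)=S_HR(R(a_2)\rightharpoonup b_2)\cdot R(a_3)\cdot R(b_3)\otimes R(R(a_1)\rightharpoonup b_1)$. It is a Yetter--Drinfeld relative Rota--Baxter operator if moreover $R$ is bijective and (RB3) $\big(a_1\rightharpoonup R^{-1}S_H(a_2)\big)\cdot_K R^{-1}(a_3)=\epsilon(a)1_K$ for all $a\in H$. *)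

(* Hopf algebras / Yetter--Drinfeld modules over a field k,
   with tensors represented as finite lists of pairs (formal sums
   sum_i x_i (x) y_i) compared via the equality of the tensor product
   (two formal sums are equal in V (x) W iff all functionals phi (x) psi,
   phi in V^*, psi in W^*, agree on them -- which holds over a field). *)
From HB Require Import structures.
From mathcomp Require Import all_boot all_order all_algebra.
Set Implicit Arguments. Unset Strict Implicit. Unset Printing Implicit Defensive.
Import GRing.Theory.
Local Open Scope ring_scope.

Section YD.
Variable k : fieldType.

Definition teq2 (U V : lmodType k) (s t : seq (U * V)) : Prop :=
  forall (f : {linear U -> k^o}) (g : {linear V -> k^o}),
    \sum_(p <- s) (f p.1 : k) * g p.2 = \sum_(p <- t) (f p.1 : k) * g p.2.

Definition teq3 (U V W : lmodType k) (s t : seq (U * V * W)) : Prop :=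
  forall (f : {linear U -> k^o}) (g : {linear V -> k^o}) (h : {linear W -> k^o}),
    \sum_(p <- s) (f p.1.1 : k) * g p.1.2 * h p.2
    = \sum_(p <- t) (f p.1.1 : k) * g p.1.2 * h p.2.

Definition tlinear (U V W : lmodType k) (d : U -> seq (V * W)) : Prop :=
  forall (c : k) (x y : U),
    teq2 (d (c *: x + y)) ([seq (c *: p.1, p.2) | p <- d x] ++ d y).

Definition lin (U V : lmodType k) (f : U -> V) : Prop :=
  forall (c : k) (x y : U), f (c *: x + y) = c *: f x + f y.

Definition linf (U : lmodType k) (f : U -> k) : Prop :=
  forall (c : k) (x y : U), f (c *: x + y) = c * f x + f y.

(* (Delta (x) id) Delta c, as triples ((c_1, c_2), c_3) *)
Definition sw3 (V : lmodType k) (d : V -> seq (V * V)) (c : V) : seq (V * V * V) :=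
  flatten [seq [seq (q.1, q.2, p.2) | q <- d p.1] | p <- d c].

Definition is_coalg (V : lmodType k) (d : V -> seq (V * V)) (e : V -> k) : Prop :=
  [/\ tlinear d, linf e,
      (forall c, teq3 (sw3 d c)
                      (flatten [seq [seq (p.1, q.1, q.2) | q <- d p.2] | p <- d c])),
      (forall c, \sum_(p <- d c) e p.1 *: p.2 = c) &
      (forall c, \sum_(p <- d c) e p.2 *: p.1 = c)].

Record hopf_data (H : algType k) := HopfData {
  hdelta : H -> seq (H * H);
  heps : H -> k;
  hS : H -> H }.

Definition is_hopf_alg (H : algType k) (D : hopf_data H) : Prop :=
  let d := hdelta D in let e := heps D in let S := hS D in
  [/\ is_coalg d e,
      (forall a b : H, teq2 (d (a * b))
                            [seq (p.1 * q.1, p.2 * q.2) | p <- d a, q <- d b]),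
      [/\ teq2 (d 1) [:: (1, 1)],
      (forall a b : H, e (a * b) = e a * e b) & e 1 = 1],
      lin S &
      (forall a : H, \sum_(p <- d a) S p.1 * p.2 = (e a)%:A
                  /\ \sum_(p <- d a) p.1 * S p.2 = (e a)%:A)].

Definition is_YD_module (H : algType k) (D : hopf_data H) (V : lmodType k)
    (act : H -> V -> V) (coact : V -> seq (H * V)) : Prop :=
  [/\ [/\ (forall (c : k) (h h' : H) (v : V), act (c *: h + h') v = c *: act h v + act h' v),
      (forall h : H, lin (act h)),
      (forall v, act 1 v = v) &
      (forall h h' v, act (h * h') v = act h (act h' v))],
      tlinear coact,
      (forall v, teq3 (flatten [seq [seq (q.1, q.2, p.2) | q <- hdelta D p.1] | p <- coact v])
                      (flatten [seq [seq (p.1, q.1, q.2) | q <- coact p.2] | p <- coact v])),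
      (forall v, \sum_(p <- coact v) heps D p.1 *: p.2 = v) &
      (forall h v, teq2 (coact (act h v))
          [seq (t.1.1 * p.1 * hS D t.2, act t.1.2 p.2) | t <- sw3 (hdelta D) h, p <- coact v])].

Record ydbim_data (H K : algType k) := YDBimData {
  kact : H -> K -> K;
  kcoact : K -> seq (H * K);
  kdelta : K -> seq (K * K);
  keps : K -> k }.

Definition is_YD_bimonoid (H : algType k) (D : hopf_data H) (K : algType k)
    (E : ydbim_data H K) : Prop :=
  let act := kact E in let rho := kcoact E in
  let d := kdelta E in let e := keps E in
  [/\ is_YD_module D act rho,
      is_coalg d e,
      [/\ (forall h (a b : K), act h (a * b) = \sum_(p <- hdelta D h) act p.1 a * act p.2 b),
          (forall h, act h 1 = heps D h *: 1),
          (forall a b : K, teq2 (rho (a * b))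
                              [seq (p.1 * q.1, p.2 * q.2) | p <- rho a, q <- rho b]) &
          teq2 (rho 1) [:: (1, 1)]],
      [/\ (forall h a, teq2 (d (act h a))
                            [seq (act p.1 q.1, act p.2 q.2) | p <- hdelta D h, q <- d a]),
          (forall a, teq3 (flatten [seq [seq (p.1, q.1, q.2) | q <- d p.2] | p <- rho a])
                          (flatten [seq [seq (x.1 * y.1, x.2, y.2) | x <- rho q.1, y <- rho q.2]
                                    | q <- d a])),
          (forall h a, e (act h a) = heps D h * e a) &
          (forall a, \sum_(p <- rho a) e p.2 *: p.1 = (e a)%:A)] &
      [/\ (forall a b : K, e (a * b) = e a * e b), e 1 = 1, teq2 (d 1) [:: (1, 1)] &
          (forall a b : K, teq2 (d (a * b))
              (flatten [seq [seq (p.1 * act r.1 q.1, r.2 * q.2) | r <- rho p.2, q <- d b]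
                        | p <- d a]))]].

Definition is_YD_hopf_monoid (H : algType k) (D : hopf_data H) (K : algType k)
    (E : ydbim_data H K) (SK : K -> K) : Prop :=
  [/\ is_YD_bimonoid D E, lin SK &
      forall a : K, \sum_(p <- kdelta E a) SK p.1 * p.2 = keps E a *: 1
                 /\ \sum_(p <- kdelta E a) p.1 * SK p.2 = keps E a *: 1].

Definition is_YD_rel_preRB (H : algType k) (D : hopf_data H) (K : algType k)
    (E : ydbim_data H K) (R : K -> H) : Prop :=
  let act := kact E in let dK := kdelta E in let S := hS D in
  [/\ lin R,
      (forall a, teq2 (hdelta D (R a)) [seq (R p.1, R p.2) | p <- dK a]),
      (forall a, heps D (R a) = keps E a),
      (forall a b : K, R a * R b = R (\sum_(p <- dK a) p.1 * act (R p.2) b)) &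
      (forall a b : K, teq2
         [seq (S (R (act (R t.1.1) u.1.1)) * R t.1.2 * R u.1.2, R (act (R t.2) u.2))
            | t <- sw3 dK a, u <- sw3 dK b]
         [seq (S (R (act (R t.1.2) u.1.2)) * R t.2 * R u.2, R (act (R t.1.1) u.1.1))
            | t <- sw3 dK a, u <- sw3 dK b])].

Definition is_YD_rel_RB (H : algType k) (D : hopf_data H) (K : algType k)
    (E : ydbim_data H K) (R : K -> H) (Rinv : H -> K) : Prop :=
  [/\ is_YD_rel_preRB D E R, cancel R Rinv, cancel Rinv R &
      (forall h : H, \sum_(t <- sw3 (hdelta D) h)
                        kact E t.1.1 (Rinv (hS D t.1.2)) * Rinv t.2 = heps D h *: 1)].

Definition YD_SK (H : algType k) (D : hopf_data H) (K : algType k)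
    (E : ydbim_data H K) (R : K -> H) (Rinv : H -> K) (a : K) : K :=
  \sum_(p <- kdelta E a) kact E (R p.1) (Rinv (hS D (R p.2))).

End YD.

(* Equality of formal tensors ([teq2], [teq3]) only says that all products
   of linear forms agree.  Over a field this already forces agreement of every
   multilinear expression in the factors: by Zorn's lemma some linear form is 1
   on a vector outside a subspace and vanishes on the subspace, so the first
   factors can be peeled off one direction at a time.
   The antipode identities are then Sweedler computations.  S_K(a_1) a_2 is
   R(a_1) |> R^-1(S_H(R(a_2))) . R^-1(R(a_3)), i.e. RB3 at R(a), because R is a
   coalgebra morphism.  By coassociativity and RB1, a_1 S_K(a_2) is
   R^-1(R(a_1) S_H(R(a_2))), which the antipode of H turns into
   eps(a) R^-1(1) = eps(a) 1. *)

From HB Require Import structures.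
From mathcomp Require Import all_boot all_order all_algebra.
From mathcomp Require Import boolp classical_sets.
Set Implicit Arguments.
Import GRing.Theory.
Local Open Scope ring_scope.
Local Open Scope classical_set_scope.

Section Lin.
Variables (k : fieldType) (U V : lmodType k) (f : U -> V) (fL : lin f).

Lemma lin0 : f 0 = 0.
Proof.
have := fL 1 0 0; rewrite !scale1r !addr0 => f00.
by apply: (addrI (f 0)); rewrite -f00 addr0.
Qed.

Lemma linD x y : f (x + y) = f x + f y.
Proof. by rewrite -{1}[x]scale1r fL scale1r. Qed.

Lemma linZ c x : f (c *: x) = c *: f x.
Proof. by rewrite -[c *: x]addr0 fL lin0 addr0. Qed.

Lemma lin_sum (I : Type) (r : seq I) (F : I -> U) :
  f (\sum_(i <- r) F i) = \sum_(i <- r) f (F i).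
Proof. by elim: r => [|a r IH]; rewrite ?big_nil ?lin0 // !big_cons linD IH. Qed.

End Lin.

Section LinearOfLin.
Variables (k : fieldType) (U : lmodType k) (f : U -> k^o) (fL : lin f).

Definition lin_fun : U -> k^o := f.
Lemma lin_fun_linear : linear lin_fun. Proof. exact: fL. Qed.
HB.instance Definition _ :=
  GRing.isLinear.Build k U k^o *:%R lin_fun lin_fun_linear.
Definition lin_functional : {linear U -> k^o} := lin_fun.

End LinearOfLin.

Section Subspaces.
Context {k : fieldType} {U : lmodType k}.

Definition is_subspace (W : set U) :=
  W 0 /\ (forall (c : k) u v, W u -> W v -> W (c *: u + v)).

Lemma subspaceZ {W} c {u} : is_subspace W -> W u -> W (c *: u).
Proof. by move=> [W0 Wc] Wu; rewrite -[c *: u]addr0; apply: Wc. Qed.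

Lemma subspaceB {W u v} : is_subspace W -> W u -> W v -> W (u - v).
Proof. by move=> [_ Wc] Wu Wv; rewrite addrC -scaleN1r; apply: Wc. Qed.

Lemma maximal_subspace_avoiding {W x} : is_subspace W -> ~ W x ->
  exists A, [/\ is_subspace A, W `<=` A, ~ A x &
                forall B, A `<` B -> is_subspace B -> B x].
Proof.
move=> sW nWx.
pose Q X := [/\ is_subspace X, W `<=` X & ~ X x].
(* [set0] is admitted so that the empty chain has an upper bound. *)
have [A [PA Amax]] : exists A, (A = set0 \/ Q A) /\
    forall B, A `<` B -> ~ (B = set0 \/ Q B).
  apply: Zorn_bigcup => F FP Ftot.
  have QF X u : F X -> X u -> Q X.
    by move=> FX Xu; case: (FP X FX) => // X0; rewrite X0 in Xu.
  have [[X0 FX0]|F0] := pselect (exists X0, F X0 /\ Q X0); last first.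
    left; apply/seteqP; split => // u [X FX Xu].
    by apply: F0; exists X; split => //; exact: QF Xu.
  right; case: FX0 => FX0 [[X00 _] WX0 _]; split.
  - split; first by exists X0.
    move=> c u v [X1 F1 X1u] [X2 F2 X2v].
    have [X12|X21] := Ftot _ _ F1 F2.
    + exists X2 => //; have [[_ X2c] _ _] := QF _ _ F2 X2v.
      by apply: X2c => //; exact: X12.
    + exists X1 => //; have [[_ X1c] _ _] := QF _ _ F1 X1u.
      by apply: X1c => //; exact: X21.
  - by move=> w Ww; exists X0 => //; exact: WX0.
  - by move=> [X FX Xx]; have [_ _] := QF _ _ FX Xx; apply.
have QA : Q A.
  case: PA => // A0; exfalso; apply: (Amax W); last by right; split.
  by rewrite A0; split => // /(_ 0 sW.1).
case: QA => sA WA nAx; exists A; split => // B AB sB.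
apply: contrapT => nBx; apply: (Amax B AB); right; split => //.
exact: subset_trans (properW AB).
Qed.

Lemma maximal_avoiding_line {A x} : is_subspace A -> ~ A x ->
    (forall B, A `<` B -> is_subspace B -> B x) ->
  forall z, exists c, A (z - c *: x).
Proof.
move=> sA nAx Amax z; apply: contrapT => nex.
pose B v := exists m c, A m /\ v = m + c *: z.
have AB : A `<=` B by move=> m Am; exists m, 0; rewrite scale0r addr0.
have sB : is_subspace B.
  split; first by apply: AB; exact: sA.1.
  move=> c _ _ [m1 [c1 [Am1 ->]]] [m2 [c2 [Am2 ->]]].
  exists (c *: m1 + m2), (c * c1 + c2); split; first exact: sA.2.
  by rewrite scalerDr scalerDl scalerA addrACA.
have Bz : B z by exists 0, 1; rewrite scale1r add0r; split => //; exact: sA.1.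
have [m [c [Am xE]]] : B x.
  apply: Amax => //; split => // /(_ z Bz) Az.
  by apply: nex; exists 0; rewrite scale0r subr0.
have [c0|cn0] := eqVneq c 0; first by apply: nAx; rewrite xE c0 scale0r addr0.
apply: nex; exists c^-1; rewrite xE scalerDr scalerA mulVf // scale1r opprD addrA.
by rewrite addrAC subrr add0r -scaleNr; exact: subspaceZ.
Qed.

Lemma avoiding_coef_unique {A x z c c'} : is_subspace A -> ~ A x ->
  A (z - c *: x) -> A (z - c' *: x) -> c = c'.
Proof.
move=> sA nAx Ac Ac'; apply: contrapT => /eqP ncc.
have : A ((c' - c) *: x).
  by have := subspaceB sA Ac Ac'; rewrite opprB addrC addrA subrK scalerBl.
move=> /(subspaceZ (c' - c)^-1 sA); rewrite scalerA mulVf ?subr_eq0 1?eq_sym //.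
by rewrite scale1r.
Qed.

Lemma separating_functional {W : set U} {x} : is_subspace W -> ~ W x ->
  exists f : {linear U -> k^o}, f x = 1 /\ forall w, W w -> f w = 0.
Proof.
move=> sW nWx.
have [A [sA WA nAx Amax]] := maximal_subspace_avoiding sW nWx.
pose f z : k^o := xget 0 (fun c => A (z - c *: x)).
have fP z : A (z - f z *: x).
  exact: xgetPex (maximal_avoiding_line sA nAx Amax z).
have fL : lin f.
  move=> c y z; apply: (avoiding_coef_unique sA nAx (fP _)).
  have -> : c *: y + z - (c * f y + f z) *: x
            = c *: (y - f y *: x) + (z - f z *: x).
    by rewrite scalerDl -scalerA scalerBr opprD addrACA.
  exact: sA.2.
exists (lin_functional fL); split.
- apply: (avoiding_coef_unique sA nAx (fP x)).
  by rewrite scale1r subrr; exact: sA.1.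
- move=> w Ww; apply: (avoiding_coef_unique sA nAx (fP w)).
  by rewrite scale0r subr0; exact: WA.
Qed.

Lemma functionals_separate (v w : U) :
  (forall f : {linear U -> k^o}, f v = f w) -> v = w.
Proof.
move=> vw; apply: contrapT => /eqP; rewrite -subr_eq0 => /eqP nvw.
have sW : is_subspace [set 0 : U].
  by split => // c u u' -> ->; rewrite scaler0 addr0.
have [f [fvw _]] := separating_functional sW nvw.
by move/eqP: fvw; rewrite linearB vw subrr eq_sym oner_eq0.
Qed.

End Subspaces.

Section Span.
Context {k : fieldType} {U : lmodType k}.

Definition span (xs : seq U) : set U :=
  [set u | exists c : nat -> k, u = \sum_(i < size xs) c i *: xs`_i].

Lemma span_subspace xs : is_subspace (span xs).
Proof.
split; first by exists (fun _ => 0); rewrite big1 // => i _; rewrite scale0r.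
move=> c _ _ [c1 ->] [c2 ->]; exists (fun i => c * c1 i + c2 i).
rewrite scaler_sumr -big_split /=; apply: eq_bigr => i _.
by rewrite scalerDl scalerA.
Qed.

Lemma span_nth xs j : (j < size xs)%N -> span xs xs`_j.
Proof.
move=> ltj; exists (fun i => (i == j)%:R).
rewrite (bigD1 (Ordinal ltj)) //= eqxx scale1r big1 ?addr0 // => i.
by rewrite -val_eqE /= => /negbTE ->; rewrite scale0r.
Qed.

Lemma span_nil u : span [::] u -> u = 0.
Proof. by move=> [c ->]; rewrite big_ord0. Qed.

Lemma span_cons x0 xs u : span (x0 :: xs) u ->
  exists c w, span xs w /\ u = c *: x0 + w.
Proof.
move=> [c ->]; rewrite big_ord_recl /=.
exists (c 0%N), (\sum_(i < size xs) c (bump 0 i) *: xs`_i).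
by split => //; exists (c \o S).
Qed.

Lemma span_cons_sub x0 xs : span xs x0 -> span (x0 :: xs) `<=` span xs.
Proof.
move=> x0xs u /span_cons [c [w [sw ->]]].
exact: (span_subspace xs).2 c x0 w x0xs sw.
Qed.

Lemma span_fst (T : eqType) (s : seq (U * T)) p : p \in s -> span (map fst s) p.1.
Proof.
move=> ps; rewrite -(nth_index p ps) -(nth_map p 0) ?index_mem //.
by apply: span_nth; rewrite size_map index_mem.
Qed.

End Span.

Section Tests.
Context {k : fieldType} {U : lmodType k} {T : eqType} (G : (T -> k^o) -> Prop).

(* [G] is the class of test functions on the second factor: linear forms for
   [teq2], bilinear forms on [V * W] for [teq3]. *)
Definition agree_on_tests (s t : seq (U * T)) :=
  forall (f : {linear U -> k^o}) g, G g ->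
    \sum_(p <- s) f p.1 * g p.2 = \sum_(p <- t) f p.1 * g p.2.

Lemma agree_on_tests_sum s t : agree_on_tests s t ->
  forall b : U -> T -> k^o, (forall y, lin (b^~ y)) -> (forall x, G (b x)) ->
  \sum_(p <- s) b p.1 p.2 = \sum_(p <- t) b p.1 p.2.
Proof.
move=> + b bl bG; move: s t.
suff gen xs s t : agree_on_tests s t ->
    (forall p, p \in s ++ t -> span xs p.1) ->
    \sum_(p <- s) b p.1 p.2 = \sum_(p <- t) b p.1 p.2.
  by move=> s t st; apply: (gen (map fst (s ++ t))) => // p; exact: span_fst.
elim: xs s t => [|x0 xs IH] s t st sp.
  have b0 p : p \in s ++ t -> b p.1 p.2 = 0.
    by move=> /sp/span_nil ->; exact: lin0 (bl _).
  by rewrite !big_seq !big1 // => p pst; apply: b0; rewrite mem_cat pst ?orbT.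
have [x0xs|nx0xs] := pselect (span xs x0).
  by apply: IH => // p /sp; exact: span_cons_sub.
have [f [fx0 fxs]] := separating_functional (span_subspace xs) nx0xs.
pose m (p : U * T) := (p.1 - f p.1 *: x0, p.2).
have sum_split r : \sum_(p <- r) b p.1 p.2
    = \sum_(p <- r) f p.1 * b x0 p.2 + \sum_(p <- map m r) b p.1 p.2.
  rewrite big_map -big_split /=; apply: eq_bigr => p _.
  rewrite -[f p.1 * _]/(f p.1 *: b x0 p.2) -(linZ (bl p.2)) -(linD (bl p.2)).
  by rewrite addrC subrK.
have sum_shift r (f' : {linear U -> k^o}) g :
    \sum_(p <- map m r) f' p.1 * g p.2
    = \sum_(p <- r) f' p.1 * g p.2 - f' x0 * \sum_(p <- r) f p.1 * g p.2.
  rewrite big_map mulr_sumr -sumrB; apply: eq_bigr => p _ /=.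
  by rewrite linearB linearZ /= mulrBl mulrA [f' x0 * _]mulrC.
rewrite (sum_split s) (sum_split t) (st f _ (bG x0)); congr (_ + _); apply: IH.
  by move=> f' g Gg; rewrite !sum_shift !st.
move=> q; rewrite -map_cat => /mapP [p /sp /span_cons [c [w [sw pE]]] ->] /=.
rewrite pE linearP /= fx0 (fxs _ sw) -[_%:A]/(c * 1) mulr1 addr0.
by rewrite addrAC subrr add0r.
Qed.

End Tests.

Section Multilinear.
Context {k : fieldType}.

Definition bilin {U V W : lmodType k} (b : U -> V -> W) :=
  (forall y, lin (b^~ y)) /\ (forall x, lin (b x)).

Definition trilin {U V W X : lmodType k} (t : U -> V -> W -> X) :=
  [/\ forall y z, lin (fun x => t x y z), forall x z, lin (fun y => t x y z)
    & forall x y, lin (t x y)].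

Lemma teq2_sum (U V W : lmodType k) (s t : seq (U * V)) (b : U -> V -> W) :
  teq2 s t -> bilin b -> \sum_(p <- s) b p.1 p.2 = \sum_(p <- t) b p.1 p.2.
Proof.
move=> st [bl br]; apply: functionals_separate => phi; rewrite !linear_sum.
apply: (agree_on_tests_sum (G := fun g : V -> k^o => lin g) _
  (fun x y => phi (b x y))) => [f g gL|y c x x'|x c y y'] /=.
- exact: st f (lin_functional gL).
- by rewrite (bl y) linearP.
- by rewrite (br x) linearP.
Qed.

Lemma teq3_sum (U V W X : lmodType k) (s r : seq (U * V * W))
    (t : U -> V -> W -> X) :
  teq3 s r -> trilin t ->
  \sum_(p <- s) t p.1.1 p.1.2 p.2 = \sum_(p <- r) t p.1.1 p.1.2 p.2.
Proof.
move=> sr [t1 t2 t3]; apply: functionals_separate => phi; rewrite !linear_sum.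
pose assoc (p : U * V * W) := (p.1.1, (p.1.2, p.2)).
pose G (g : V * W -> k^o) := bilin (fun y z => g (y, z)).
have := agree_on_tests_sum (G := G)
  (s := map assoc s) (t := map assoc r) _ (fun x q => phi (t x q.1 q.2)).
rewrite !big_map; apply=> [f g [gl gr]|q c x x'|x] /=.
- pose scale1 (p : U * V * W) := (f p.1.1 *: p.1.2, p.2).
  have scale1E q : \sum_(p <- map assoc q) f p.1 * g p.2
                   = \sum_(p <- map scale1 q) g (p.1, p.2).
    by rewrite !big_map; apply: eq_bigr => p _ /=; rewrite (linZ (gl p.2)).
  rewrite !scale1E; apply: teq2_sum (conj gl gr) => f2 g2; rewrite !big_map.
  have scale1A q : \sum_(p <- q) f2 (scale1 p).1 * g2 (scale1 p).2
                   = \sum_(p <- q) f p.1.1 * f2 p.1.2 * g2 p.2.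
    by apply: eq_bigr => p _; rewrite /= linearZ.
  by rewrite !scale1A sr.
- by rewrite (t1 q.1 q.2) linearP.
- by split=> [z c y y'|y c z z'] /=; rewrite ?(t2 x z) ?(t3 x y) linearP.
Qed.

End Multilinear.

Section Coalgebra.
Context {k : fieldType}.

Lemma lin_can {U V : lmodType k} (f : U -> V) (g : V -> U) :
  lin f -> cancel f g -> cancel g f -> lin g.
Proof. by move=> fL fK gK c x y; apply: (can_inj fK); rewrite fL !gK. Qed.

Lemma tlinear_sum {U V W X : lmodType k} (d : U -> seq (V * W)) (b : V -> W -> X) :
  tlinear d -> bilin b -> lin (fun x => \sum_(q <- d x) b q.1 q.2).
Proof.
move=> dL [bl br] c x y; rewrite (teq2_sum (dL c x y) (conj bl br)).
rewrite big_cat big_map /= scaler_sumr; congr (_ + _); apply: eq_bigr => q _.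
by rewrite (linZ (bl q.2)).
Qed.

Lemma sum_sw3 {V X : lmodType k} (d : V -> seq (V * V)) (F : V * V * V -> X) c :
  \sum_(t <- sw3 d c) F t = \sum_(p <- d c) \sum_(q <- d p.1) F (q.1, q.2, p.2).
Proof. by rewrite big_flatten big_map; apply: eq_bigr => p _; rewrite big_map. Qed.

Lemma sum_sw3_morph {H K X : lmodType k} {dH : H -> seq (H * H)}
    {dK : K -> seq (K * K)} {R : K -> H} {t : H -> H -> H -> X} a :
  tlinear dH -> (forall a, teq2 (dH (R a)) [seq (R p.1, R p.2) | p <- dK a]) ->
  trilin t ->
  \sum_(q <- sw3 dH (R a)) t q.1.1 q.1.2 q.2
  = \sum_(q <- sw3 dK a) t (R q.1.1) (R q.1.2) (R q.2).
Proof.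
move=> dHL Rmorph [t1 t2 t3]; rewrite !sum_sw3.
pose G x z := \sum_(q <- dH x) t q.1 q.2 z.
have GL : bilin G.
  split=> [z|x]; first exact: (tlinear_sum (b := fun u v => t u v z)).
  move=> c z z'; rewrite scaler_sumr -big_split.
  by apply: eq_bigr => q _; exact: t3.
rewrite (teq2_sum (Rmorph a) GL) big_map; apply: eq_bigr => p _.
by rewrite /G (teq2_sum (Rmorph p.1) (b := fun u v => t u v (R p.2))) ?big_map.
Qed.

End Coalgebra.

Section RotaBaxterAntipode.
Variables (k : fieldType) (H K : algType k) (D : hopf_data H)
  (E : ydbim_data H K) (R : K -> H) (Rinv : H -> K).
Hypotheses (hH : is_hopf_alg D) (hK : is_YD_bimonoid D E)
  (hRB : is_YD_rel_RB D E R Rinv).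

Local Notation dH := (hdelta D).
Local Notation S := (hS D).
Local Notation dK := (kdelta E).
Local Notation act := (kact E).
Local Notation SK := (YD_SK D E R Rinv).

Let dH_tlinear : tlinear dH. Proof. by case: hH => [[]]. Qed.
Let S_lin : lin S. Proof. by case: hH. Qed.
Let S_antipode a : \sum_(p <- dH a) p.1 * S p.2 = (heps D a)%:A.
Proof. by case: hH => _ _ _ _ /(_ a) []. Qed.

Let act_linl v : lin (fun h => act h v).
Proof. by case: hK => [[[actL _ _ _] _ _ _ _] _ _ _ _] c h h'; exact: actL. Qed.
Let act_lin h : lin (act h). Proof. by case: hK => [[[]]]. Qed.
Let act_unit h : act h 1 = heps D h *: 1. Proof. by case: hK => _ _ []. Qed.
Let dK_tlinear : tlinear dK. Proof. by case: hK => _ []. Qed.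
Let dK_coassoc a : teq3 (sw3 dK a)
    (flatten [seq [seq (p.1, q.1, q.2) | q <- dK p.2] | p <- dK a]).
Proof. by case: hK => _ []. Qed.
Let dK_counitr a : \sum_(p <- dK a) keps E p.2 *: p.1 = a.
Proof. by case: hK => _ []. Qed.

Let R_lin : lin R. Proof. by case: hRB => [[]]. Qed.
Let R_morph a : teq2 (dH (R a)) [seq (R p.1, R p.2) | p <- dK a].
Proof. by case: hRB => [[]]. Qed.
Let R_eps a : heps D (R a) = keps E a. Proof. by case: hRB => [[]]. Qed.
Let RB1 a b : R a * R b = R (\sum_(p <- dK a) p.1 * act (R p.2) b).
Proof. by case: hRB => [[]]. Qed.
Let RK : cancel R Rinv. Proof. by case: hRB. Qed.
Let RinvK : cancel Rinv R. Proof. by case: hRB. Qed.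
Let RB3 h :
  \sum_(t <- sw3 dH h) act t.1.1 (Rinv (S t.1.2)) * Rinv t.2 = heps D h *: 1.
Proof. by case: hRB. Qed.

Let Rinv_lin : lin Rinv. Proof. exact: lin_can RK RinvK. Qed.

Lemma RB_unit : R 1 = 1.
Proof.
have := RB1 (Rinv 1) 1; rewrite RinvK mul1r => ->.
rewrite -[RHS]RinvK -[in RHS](dK_counitr (Rinv 1)); congr R; apply: eq_bigr => p _.
by rewrite act_unit -scalerAr mulr1 R_eps.
Qed.

Lemma RBinv_unit : Rinv 1 = 1.
Proof. by rewrite -RB_unit RK. Qed.

Lemma YD_SK_lin : lin SK.
Proof.
apply: (tlinear_sum (b := fun x y => act (R x) (Rinv (S (R y))))) => //.
split=> [y c x x'|x c y y'] /=; first by rewrite R_lin act_linl.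
by rewrite R_lin S_lin Rinv_lin act_lin.
Qed.

Lemma YD_SK_antipodel a : \sum_(p <- dK a) SK p.1 * p.2 = keps E a *: 1.
Proof.
have tL : trilin (fun x y z => act x (Rinv (S y)) * Rinv z).
  split=> [y z c x x'|x z c y y'|x y c z z'] /=.
  - by rewrite act_linl mulrDl scalerAl.
  - by rewrite S_lin Rinv_lin act_lin mulrDl scalerAl.
  - by rewrite Rinv_lin mulrDr scalerAr.
rewrite -R_eps -RB3 (sum_sw3_morph a dH_tlinear R_morph tL) sum_sw3.
apply: eq_bigr => p _; rewrite /YD_SK mulr_suml; apply: eq_bigr => q _.
by rewrite RK.
Qed.

Lemma YD_SK_antipoder a : \sum_(p <- dK a) p.1 * SK p.2 = keps E a *: 1.
Proof.
have tL : trilin (fun x y z => x * act (R y) (Rinv (S (R z)))).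
  split=> [y z c x x'|x z c y y'|x y c z z'] /=.
  - by rewrite mulrDl scalerAl.
  - by rewrite R_lin act_linl mulrDr scalerAr.
  - by rewrite R_lin S_lin Rinv_lin act_lin mulrDr scalerAr.
transitivity (\sum_(t <- flatten [seq [seq (p.1, q.1, q.2) | q <- dK p.2]
                                  | p <- dK a])
                t.1.1 * act (R t.1.2) (Rinv (S (R t.2)))).
  rewrite big_flatten big_map; apply: eq_bigr => p _.
  by rewrite /YD_SK big_map mulr_sumr.
rewrite -(teq3_sum (dK_coassoc a) tL) sum_sw3.
transitivity (\sum_(p <- dK a) Rinv (R p.1 * S (R p.2))).
  by apply: eq_bigr => p _; rewrite -[in RHS](RinvK (S (R p.2))) RB1 RK.
have bL : bilin (fun x y => Rinv (x * S y)).
  split=> [y c x x'|x c y y'] /=; first by rewrite mulrDl -scalerAl Rinv_lin.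
  by rewrite S_lin mulrDr -scalerAr Rinv_lin.
rewrite -(big_map (fun p => (R p.1, R p.2)) xpredT (fun p => Rinv (p.1 * S p.2))).
rewrite -(teq2_sum (R_morph a) bL) -(lin_sum Rinv_lin) S_antipode R_eps.
by rewrite (linZ Rinv_lin) RBinv_unit.
Qed.

End RotaBaxterAntipode.

Theorem lemma4 (k : fieldType) (H K : algType k) (D : hopf_data H)
    (E : ydbim_data H K) (R : K -> H) (Rinv : H -> K) :
  is_hopf_alg D -> is_YD_bimonoid D E -> is_YD_rel_RB D E R Rinv ->
  (forall a : K,
      \sum_(p <- kdelta E a) YD_SK D E R Rinv p.1 * p.2 = keps E a *: 1
   /\ \sum_(p <- kdelta E a) p.1 * YD_SK D E R Rinv p.2 = keps E a *: 1)
  /\ is_YD_hopf_monoid D E (YD_SK D E R Rinv).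
Proof.
move=> hH hK hRB.
have antipode a := conj (YD_SK_antipodel hH hK hRB a) (YD_SK_antipoder hH hK hRB a).
by split=> //; split=> //; exact: YD_SK_lin.
Qed.
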